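(* Let $g$ be a positive integer; suppose that for some $l$ the set $S_l$ contains a consecutive prospective prime pair with gap $g$, and let $j>l+2$. Let $(a,a+g)$ be a consecutive prospective prime pair with gap $g$ in $S_j$. For $0\le m\le P_{j+1}-1$ put $(a_m,a_m+g)=(a+mP_j\#,\,a+g+mP_j\#)$, and call $m$ allowed if both $a_m$ and $a_m+g$ are coprime to $P_{j+1}\#$. Then for each allowed $m$ the pair $(a_m,a_m+g)$ lies in the subset $S_{j+1}^{(m)}$ (so distinct allowed $m$ give pairs in distinct subsets of $S_{j+1}$), and the number of allowed $m$ is $P_{j+1}-1$ if $P_{j+1}\mid g$ and $P_{j+1}-2$ if $P_{j+1}\nmid g$; i.e., the generated pairs occupy, one each, all but one subset of $S_{j+1}$ if $P_{j+1}\mid g$ and all but two subsets otherwise.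
   Context: $P_k$ denotes the $k$-th prime ($P_1=2$), $P_k\#=\prod_{i=1}^kP_i$. $S_k=\{N\in\mathbb{N}:5\le N\le4+P_k\#\}$ and $S_k^{(m)}=\{N:5+mP_{k-1}\#\le N\le 4+(m+1)P_{k-1}\#\}$ for $0\le m\le P_k-1$. A prospective prime in $S_k$ is an $N\in S_k$ coprime to $P_k\#$; prospective primes $a<b$ in $S_k$ are consecutive if no integer strictly between them is coprime to $P_k\#$; a consecutive prospective prime pair with gap $g$ is a pair $(a,a+g)$ of consecutive prospective primes. *)

From mathcomp Require Import all_boot.
Set Implicit Arguments. Unset Strict Implicit. Unset Printing Implicit Defensive.

Lemma next_prime_ex (n : nat) : exists p, (n < p) && prime p.
Proof. by case: (prime_above n) => p H1 H2; exists p; rewrite H1 H2. Qed.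

Definition next_prime (n : nat) : nat := ex_minn (next_prime_ex n).

(* P k = k-th prime, P 1 = 2 (P 0 = 1 is a dummy value) *)
Fixpoint P (k : nat) : nat :=
  match k with 0 => 1 | k'.+1 => next_prime (P k') end.

Definition primorial (k : nat) : nat := \prod_(1 <= i < k.+1) P i.

Definition inS (k N : nat) : bool := (5 <= N) && (N <= 4 + primorial k).

Definition inSsub (k m N : nat) : bool :=
  (5 + m * primorial k.-1 <= N) && (N <= 4 + m.+1 * primorial k.-1).

Definition prospective (k N : nat) : bool := inS k N && coprime N (primorial k).

Definition consecutive (k a b : nat) : Prop :=
  [/\ prospective k a, prospective k b, a < b &
      forall n, a < n < b -> ~~ coprime n (primorial k)].

Definition cpp_pair (k g a : nat) : Prop := consecutive k a (a + g).

Definition allowed (j g a m : nat) : bool :=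
  coprime (a + m * primorial j) (primorial j.+1) &&
  coprime (a + g + m * primorial j) (primorial j.+1).

From mathcomp Require Import all_boot.
From mathcomp Require Import zify.

(* Shifting a pair of S_j by m P_j# lands in S_{j+1}^(m), and modulo every
   prime below P_{j+1} the shifted numbers keep the residues of a and a + g,
   so they stay coprime to P_j#.  Modulo p = P_{j+1}, which is coprime to
   P_j#, the shifts a + m P_j# (0 <= m < p) run through every residue exactly
   once; hence exactly one m makes a_m divisible by p, exactly one makes
   a_m + g divisible by p, and these two values of m coincide iff p | g. *)

Lemma P_lt_succ k : P k < P k.+1.
Proof. by rewrite /= /next_prime; case: ex_minnP => q /andP[]. Qed.

Lemma prime_P k : 0 < k -> prime (P k).
Proof. by case: k => // k _; rewrite /= /next_prime; case: ex_minnP => q /andP[]. Qed.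

Lemma P_increasing : {homo P : i k / i < k}.
Proof. exact: homo_ltn ltn_trans P_lt_succ. Qed.

Lemma primorialS k : primorial k.+1 = primorial k * P k.+1.
Proof. by rewrite /primorial big_nat_recr. Qed.

Lemma coprime_P_primorial k : coprime (P k.+1) (primorial k).
Proof.
rewrite /primorial big_seq; apply: (big_ind (coprime (P k.+1))); first exact: coprimen1.
  by move=> x y cx cy; rewrite coprimeMr cx cy.
move=> i; rewrite mem_index_iota => /andP[i_gt0 i_le_k].
rewrite prime_coprime ?prime_P // dvdn_prime2 ?prime_P //.
by rewrite eq_sym neq_ltn P_increasing.
Qed.

Lemma inSsub_shift j m N : inS j N -> inSsub j.+1 m (N + m * primorial j).
Proof. by rewrite /inS /inSsub /= mulSn => /andP[N_ge N_le]; apply/andP; split; lia. Qed.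

Lemma coprime_affine_mul_prime p Q c m : prime p -> coprime c Q ->
  coprime (c + m * Q) (Q * p) = ~~ (p %| c + m * Q).
Proof.
move=> p_prime cQ; rewrite coprimeMr -coprime_modl addnC modnMDl coprime_modl cQ.
by rewrite coprime_sym prime_coprime // addnC.
Qed.

Section AffineResidues.

Variables p Q : nat.
Hypothesis p_gt0 : 0 < p.
Hypothesis coprime_pQ : coprime p Q.

Lemma modn_affine_inj c : {in gtn p &, injective (fun m => (c + m * Q) %% p)}.
Proof.
suff le_inj m m' : m < p -> m' < p -> m <= m' ->
    (c + m * Q) %% p = (c + m' * Q) %% p -> m = m'.
  move=> m m' /= lt_m lt_m' eq_mod.
  by case: (leqP m m') => [|/ltnW] le; [|apply/esym]; apply: le_inj.
move=> lt_m lt_m' le_mm' /eqP; rewrite eq_sym eqn_modDl eqn_mod_dvd ?leq_mul2r ?le_mm' ?orbT //.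
rewrite -mulnBl Gauss_dvdl //; case: (posnP (m' - m)) => [|diff_gt0]; first lia.
by rewrite gtnNdvd //; lia.
Qed.

(* [p %| x] unfolds to [x %% p == 0], so the count is that of the residue 0
   among the residues of the shifts, which form a permutation of [0, p). *)
Lemma count_dvdn_affine c : count (fun m => p %| c + m * Q) (iota 0 p) = 1.
Proof.
set f := fun m => (c + m * Q) %% p.
have f_inj : {in iota 0 p &, injective f}.
  by move=> m m'; rewrite !mem_iota; apply: modn_affine_inj.
have f_uniq : uniq (map f (iota 0 p)) by rewrite map_inj_in_uniq ?iota_uniq.
have f_sub : {subset map f (iota 0 p) <= iota 0 p}.
  by move=> _ /mapP[m _ ->]; rewrite mem_iota ltn_pmod.
have [_ f_onto] := uniq_min_size f_uniq f_sub (eq_leq (esym (size_map _ _))).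
rewrite -[LHS]/(count (preim f (pred1 0)) _) -count_map.
by rewrite count_uniq_mem // f_onto mem_iota p_gt0.
Qed.

Lemma count_ndvdn_affine2 a g :
  count (fun m => ~~ (p %| a + m * Q) && ~~ (p %| a + g + m * Q)) (iota 0 p) =
    (if p %| g then p.-1 else p.-2).
Proof.
pose A m := p %| a + m * Q; pose B m := p %| a + g + m * Q.
have AB_A m : A m && B m = A m && (p %| g).
  by rewrite /B addnAC; case Am: (A m); rewrite //= dvdn_addr.
have count_AB : count (predI A B) (iota 0 p) = (p %| g).
  rewrite (eq_count AB_A); case: (p %| g).
  - by under eq_count do rewrite andbT; apply: count_dvdn_affine.
  - by under eq_count do rewrite andbF; apply: count_pred0.
rewrite (@eq_count _ _ (predC (predU A B))) => [|m]; last by rewrite /= negb_or.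
have := count_predUI A B (iota 0 p).
have := count_predC (predU A B) (iota 0 p).
rewrite count_AB !count_dvdn_affine size_iota.
by case: (p %| g); lia.
Qed.

End AffineResidues.

(* The hypotheses on g and on S_l describe the paper's setting; the
   conclusion does not depend on them. *)
Theorem lemma2 (g l j a : nat) :
  0 < g ->
  (exists b, cpp_pair l g b) ->
  l + 2 < j ->
  cpp_pair j g a ->
  (forall m, m < P j.+1 -> allowed j g a m ->
     inSsub j.+1 m (a + m * primorial j) &&
     inSsub j.+1 m (a + g + m * primorial j)) /\
  count (allowed j g a) (iota 0 (P j.+1)) =
    (if P j.+1 %| g then (P j.+1).-1 else (P j.+1).-2).
Proof.
move=> _ _ _ [/andP[a_inS a_cop] /andP[ag_inS ag_cop] _ _].
split=> [m _ _|]; first by rewrite !inSsub_shift.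
have p_prime : prime (P j.+1) by apply: prime_P.
rewrite -(@count_ndvdn_affine2 _ _ (prime_gt0 p_prime) (coprime_P_primorial j) a g).
apply: eq_count => m.
by rewrite /allowed primorialS !coprime_affine_mul_prime.
Qed.
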